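(* Let $X$ be a scattered topological space such that $\mathrm{Homeo}(X)$ is fully transitive. Then the topological group $\mathrm{Homeo}(X)$ is amenable and Roelcke-precompact.
   Context: A topological space (not assumed Hausdorff) is scattered if every nonempty subset has a point that is isolated in that subset. For scattered $X$, $\mathrm{Homeo}(X)$ is endowed with the topology of pointwise convergence on $X$, making it a Hausdorff topological group. Two points $x,y\in X$ are similar if there are neighbourhoods $U_x\ni x$, $U_y\ni y$ and a homeomorphism $h\colon U_x\to U_y$ with $h(x)=y$. $\mathrm{Homeo}(X)$ is fully transitive if for every $k$ and all $k$-tuples $(x_1,\dots,x_k)$, $(y_1,\dots,y_k)$ of pairwise distinct points with $x_i$ similar to $y_i$ for each $i$, some homeomorphism $g$ satisfies $g(x_i)=y_i$ for all $i$. Amenable: every continuous affine action on a nonempty compact convex set has a fixed point. Roelcke-precompact: for every identity neighbourhood $U$ there is a finite $F$ with $G=UFU$. *)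

From HB Require Import structures.
From mathcomp Require Import all_boot all_order all_algebra.
From mathcomp Require Import all_classical all_reals all_analysis.
Set Implicit Arguments. Unset Strict Implicit. Unset Printing Implicit Defensive.
Import Order.TTheory GRing.Theory Num.Theory.
Local Open Scope classical_set_scope.
Local Open Scope ring_scope.

Section Defs.
Context {X : topologicalType}.

Definition scattered : Prop :=
  forall A : set X, A !=set0 ->
    exists2 x, A x & exists2 U : set X, open U /\ U x & U `&` A = [set x].

Definition subspace_homeo (A B : set X) (h : X -> X) : Prop :=
  exists k : X -> X,
    [/\ {in A, forall a, B (h a) /\ k (h a) = a},
        {in B, forall b, A (k b) /\ h (k b) = b},
        {within A, continuous h} & {within B, continuous k}].

Definition similar (x y : X) : Prop :=
  exists Ux Uy (h : X -> X),
    [/\ nbhs x Ux, nbhs y Uy, subspace_homeo Ux Uy h & h x = y].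

Definition homeo (f : X -> X) : Prop := subspace_homeo setT setT f.
Definition Homeo : set (X -> X) := [set f | homeo f].

Definition fully_transitive : Prop :=
  forall (k : nat) (xs ys : 'I_k -> X),
    injective xs -> injective ys -> (forall i, similar (xs i) (ys i)) ->
    exists2 g, Homeo g & forall i, g (xs i) = ys i.

(* Homeo(X) carries the subspace topology of the topology of pointwise
   convergence {ptws X -> X}. Identity neighbourhoods of Homeo(X): *)
Definition homeo_id_nbhs (U : set (X -> X)) : Prop :=
  U `<=` Homeo /\
  exists2 V : set {ptws X -> X}, nbhs (id : {ptws X -> X}) V & V `&` Homeo `<=` U.

Definition roelcke_precompact : Prop :=
  forall U, homeo_id_nbhs U ->
    exists2 F : set (X -> X), finite_set F /\ F `<=` Homeo &
      Homeo = [set g | exists u f v, [/\ U u, F f, U v & g = u \o f \o v]].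

Definition amenable : Prop :=
  forall (R : realType) (E : tvsType R) (K : set E)
         (act : (X -> X) -> E -> E),
    hausdorff_space E -> K !=set0 -> compact K -> convex_set (K : set (convex_lmodType E)) ->
    (forall g k, Homeo g -> K k -> K (act g k)) ->
    (forall k, K k -> act id k = k) ->
    (forall g h k, Homeo g -> Homeo h -> K k -> act (g \o h) k = act g (act h k)) ->
    (forall g a b (t : R), Homeo g -> K a -> K b -> 0 <= t -> t <= 1 ->
       act g (t *: a + (1 - t) *: b) = t *: act g a + (1 - t) *: act g b) ->
    {within (Homeo `*` K : set ({ptws X -> X} * E)), continuous (fun p : {ptws X -> X} * E => act p.1 p.2)} ->
    exists2 k, K k & forall g, Homeo g -> act g k = k.

End Defs.
Arguments scattered : clear implicits.
Arguments fully_transitive : clear implicits.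
Arguments amenable : clear implicits.
Arguments roelcke_precompact : clear implicits.

(* Everything comes from the stabilisers Stab(s) of finite sets s, which form a base
   of identity neighbourhoods of Homeo(X) in the pointwise topology.

   Roelcke precompactness: the double coset Stab(s) g Stab(s) only depends on the
   trace of g on s (which points of s are sent into s, and where), and there are
   finitely many traces.  Given f and g with the same trace, full transitivity yields
   u in Stab(s) sending f x to g x whenever x is in s, so that f^-1 u^-1 g is in Stab(s).

   Amenability: by compactness of K it suffices to find, for finitely many g and a
   convex neighbourhood W of 0, a point k of K with act g k - k in W.  Compactness and
   continuity give s such that Stab(s) moves every point of K within W.  Take a
   finite B containing s and its preimages under the g's.  Full transitivity realises
   every permutation of B preserving the Homeo(X)-orbits by a homeomorphism H sigma,
   and modulo Stab(s) each g acts on these realisers as a right translation by some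
   tau of this finite group; so averaging act (H sigma) k0 over the group gives k. *)

From Pilot Require Import Defs.
From mathcomp Require Import all_boot all_order all_algebra all_fingroup.
From mathcomp Require Import all_classical all_reals all_analysis.
From mathcomp Require Import ring.
Set Implicit Arguments. Unset Strict Implicit. Unset Printing Implicit Defensive.
Import Order.TTheory GRing.Theory Num.Theory.

Section ClassPreservingPerm.
Variables (T : finType) (e : rel T).
Hypotheses (e_refl : reflexive e) (e_sym : symmetric e) (e_trans : transitive e).

Definition class_perms : {set {perm T}} := [set s : {perm T} | [forall x, e x (s x)]].

Lemma class_perms_group_set : group_set class_perms.
Proof.
apply/group_setP; split=> [|s t]; first by rewrite inE; apply/forallP => x; rewrite perm1.
rewrite !inE => /forallP es /forallP et; apply/forallP => x.
by rewrite permM (e_trans (es x) (et (s x))).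
Qed.

Definition class_perms_group : {group {perm T}} := Group class_perms_group_set.

Lemma exists_class_notin_image (D : {set T}) (f : T -> T) x0 :
  {in D, forall x, e x (f x)} -> x0 \notin D ->
  exists2 y0, e x0 y0 & y0 \notin f @: D.
Proof.
move=> ef x0D; pose C := [set y | e x0 y].
have CDC : C :&: D \proper C.
  by apply/properP; split; [exact: subsetIl | exists x0; rewrite !inE ?e_refl ?(negbTE x0D)].
have: ~~ (C \subset f @: (C :&: D)).
  apply/negP => /subset_leq_card.
  by rewrite leqNgt (leq_ltn_trans (leq_imset_card _ _) (proper_card CDC)).
case/subsetPn => y0; rewrite inE => ey0 y0nim; exists y0 => //.
apply: contra y0nim => /imsetP[x xD y0E]; apply/imsetP; exists x => //.
by rewrite !inE xD andbT (e_trans ey0) // y0E e_sym ef.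
Qed.

Lemma class_perm_extend (D : {set T}) (f : T -> T) :
  {in D &, injective f} -> {in D, forall x, e x (f x)} ->
  exists2 s, s \in class_perms & {in D, s =1 f}.
Proof.
move: {2}#|~: D| (leqnn #|~: D|) => n; elim: n D f => [|n IH] D f.
  rewrite leqn0 cards_eq0 => /eqP CD0 injf ef.
  have Dx x : x \in D by move/setP/(_ x): CD0; rewrite !inE => /negbFE.
  have finj : injective f by move=> x y; apply: injf.
  exists (perm finj) => [|x _]; last by rewrite permE.
  by rewrite inE; apply/forallP => x; rewrite permE ef.
move=> leDn injf ef; have [CD0 | [x0]] := set_0Vmem (~: D).
  by apply: IH => //; rewrite CD0 cards0.
rewrite inE => x0D.
have [y0 ey0 y0nim] := exists_class_notin_image ef x0D.
pose f' x := if x == x0 then y0 else f x.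
have [|||s Ps sf'] := IH (x0 |: D) f'.
- rewrite -ltnS (leq_trans _ leDn) // proper_card // properC.
  by apply/properP; split; [exact: subsetU1 | exists x0; rewrite ?setU11].
- move=> x y; rewrite !inE /f'.
  case: eqP => [-> _|_ /= xD]; case: eqP => [-> _|_ /= yD] //.
  + by move=> y0E; rewrite y0E imset_f in y0nim.
  + by move=> y0E; rewrite -y0E imset_f in y0nim.
  + exact: injf.
- by move=> x; rewrite !inE /f'; case: eqP => [->|_] //= /ef.
exists s => // x xD; rewrite sf' ?setU1r // /f'.
by case: eqP xD => [->|//]; rewrite (negbTE x0D).
Qed.
End ClassPreservingPerm.

Local Open Scope classical_set_scope.

Section Homeomorphisms.
Variable X : topologicalType.

Lemma homeoP (f : X -> X) :
  Homeo f <-> exists g, [/\ cancel f g, cancel g f, continuous f & continuous g].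
Proof.
have withinT (h : X -> X) : {within setT, continuous h} <-> continuous h.
  by split=> hc x; have := hc x; rewrite /continuous_at nbhs_subspaceT.
split=> [[g [fg gf cf cg]]|[g [fg gf cf cg]]].
  exists g; split; [by move=> x; case: (fg x (in_setT x))|by move=> x; case: (gf x (in_setT x))|..].
  - exact/withinT.
  - exact/withinT.
by exists g; split; [by move=> x _|by move=> x _|exact/withinT..].
Qed.

Lemma homeo_id : Homeo (@id X).
Proof. by apply/homeoP; exists id; split=> // x; exact: cvg_id. Qed.

Lemma homeo_comp (f g : X -> X) : Homeo f -> Homeo g -> Homeo (f \o g).
Proof.
move=> /homeoP[f' [ff' f'f cf cf']] /homeoP[g' [gg' g'g cg cg']].
apply/homeoP; exists (g' \o f'); split; [exact: can_comp|exact: can_comp|..].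
- by move=> x; apply: continuous_comp; [exact: cg|exact: cf].
- by move=> x; apply: continuous_comp; [exact: cf'|exact: cg'].
Qed.

Lemma homeo_inv (f : X -> X) :
  Homeo f -> exists2 g, Homeo g & cancel f g /\ cancel g f.
Proof. by move=> /homeoP[g [fg gf cf cg]]; exists g => //; apply/homeoP; exists f. Qed.

Lemma homeo_inj (f : X -> X) : Homeo f -> injective f.
Proof. by move=> /homeo_inv[g _ [fg _]]; exact: can_inj fg. Qed.

Lemma homeo_similar (h : X -> X) x : Homeo h -> Defs.similar x (h x).
Proof. by move=> Hh; exists [set: X], [set: X], h; split=> //; exact: filter_nbhsT. Qed.

Lemma homeo_preimages (s : seq X) (gs : seq (X -> X)) : {in gs, forall g, Homeo g} ->
  exists2 B : seq X, {subset s <= B} &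
    {in gs, forall g, {in s, forall a, exists2 x, x \in B & g x = a}}.
Proof.
elim: gs => [|g gs IH] Hgs; first by exists s.
have [|B sB gsB] := IH; first by move=> h hin; apply: Hgs; rewrite in_cons hin orbT.
have [k _ [_ gk]] := homeo_inv (Hgs g (mem_head _ _)).
exists (map k s ++ B) => [a sa|h]; first by rewrite mem_cat sB ?orbT.
rewrite in_cons => /predU1P[-> a sa|hin a sa].
  by exists (k a); rewrite ?mem_cat ?map_f ?gk.
by have [x xB hx] := gsB h hin a sa; exists x; rewrite ?mem_cat ?xB ?orbT.
Qed.

End Homeomorphisms.

Section FullTransitivity.
Variable X : topologicalType.
Hypothesis FT : fully_transitive X.

Lemma fully_transitive_fin (T : finType) (b c : T -> X) :
  injective b -> injective c -> (forall t, Defs.similar (b t) (c t)) ->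
  exists2 h, Homeo h & forall t, h (b t) = c t.
Proof.
move=> binj cinj bc.
have [h Hh hbc] := FT (inj_comp binj (@enum_val_inj _ T))
  (inj_comp cinj (@enum_val_inj _ T)) (fun i => bc (enum_val i)).
by exists h => // t; rewrite -[t]enum_rankK; exact: hbc.
Qed.

Lemma fully_transitive_extend (A : seq X) (phi : X -> X) :
  {in A &, injective phi} -> {in A, forall x, Defs.similar x (phi x)} ->
  exists2 h, Homeo h & {in A, h =1 phi}.
Proof.
move=> phi_inj phi_sim.
have [||t|h Hh hphi] := @fully_transitive_fin (seq_sub A) val (phi \o val).
- exact: val_inj.
- by move=> s t /phi_inj/val_inj; apply; exact: valP.
- exact: phi_sim (valP t).
by exists h => // x xA; exact: (hphi (SeqSub xA)).
Qed.
End FullTransitivity.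

Section PointwiseTopology.
Variable X : topologicalType.

Definition agree_filter (f : X -> X) : set_system (X -> X) :=
  filter_from [set: seq X] (fun s => [set g : X -> X | {in s, g =1 f}]).

Lemma agree_filter_filter f : Filter (agree_filter f).
Proof.
apply: filter_from_filter; first by exists [::].
move=> s t _ _; exists (s ++ t) => // g gst.
by split=> x xs; apply: gst; rewrite mem_cat xs ?orbT.
Qed.

Lemma agree_filter_cvg f : agree_filter f --> (f : {ptws X -> X}).
Proof.
have Ff := agree_filter_filter f; apply/cvg_sup => x A /=.
rewrite (@nbhsE (initial_topology (fun g : X -> X => g x))) => -[B [[C Cop CB] Bf] BA].
exists [:: x] => // g /(_ x (mem_head _ _)) gx.
by apply: BA; rewrite -CB /= gx; rewrite -CB in Bf.
Qed.

Lemma ptws_nbhs_agree (f : X -> X) (V : set {ptws X -> X}) :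
  nbhs (f : {ptws X -> X}) V -> exists s : seq X, forall g, {in s, g =1 f} -> V g.
Proof. by move=> /agree_filter_cvg[s _ sV]; exists s. Qed.

Lemma homeo_id_nbhs_stabilizer (U : set (X -> X)) : homeo_id_nbhs U ->
  exists s : seq X, forall u, Homeo u -> {in s, u =1 id} -> U u.
Proof.
move=> [_ [V /ptws_nbhs_agree[s sV] VU]]; exists s => u Hu su.
by apply: VU; split; [exact: sV|].
Qed.

End PointwiseTopology.

Section RoelckePrecompact.
Variable X : topologicalType.
Hypothesis FT : fully_transitive X.

Definition trace (a : seq X) (g : X -> X) : {ffun seq_sub a -> option (seq_sub a)} :=
  [ffun x => insub (g (val x))].

Lemma trace_eq_mem (a : seq X) (f g : X -> X) x :
  trace a f = trace a g -> x \in a -> f x \in a -> f x = g x.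
Proof.
move=> tfg xa fxa.
have := congr1 (fun p : {ffun seq_sub a -> option (seq_sub a)} => omap val (p (SeqSub xa))) tfg.
rewrite /= !ffunE (insubT (mem a) fxa) /=.
by case: insubP => [y _ <- []|].
Qed.

Lemma eq_trace_double_coset (a : seq X) (f g : X -> X) :
  Homeo f -> Homeo g -> trace a f = trace a g ->
  exists u v, [/\ Homeo u, Homeo v, {in a, u =1 id}, {in a, v =1 id}
    & g = u \o f \o v].
Proof.
move=> Hf Hg tfg; have [f' Hf' [ff' f'f]] := homeo_inv Hf.
pose phi y := if y \in a then y else g (f' y).
have phi_f : {in a, forall x, phi (f x) = g x}.
  move=> x xa; rewrite /phi; case: ifP => [|_]; [exact: trace_eq_mem | by rewrite ff'].
have [||u Hu uphi] := @fully_transitive_extend X FT (a ++ map f a) phi.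
- move=> y1 y2; rewrite !mem_cat.
  move=> /orP[y1a | /mapP[x1 x1a ->]] /orP[y2a | /mapP[x2 x2a ->]].
  + by rewrite /phi y1a y2a.
  + by rewrite phi_f // /phi y1a => y1E; rewrite y1E (trace_eq_mem (esym tfg)) // -y1E.
  + by rewrite phi_f // /phi y2a => y2E; rewrite -y2E (trace_eq_mem (esym tfg)) // y2E.
  + by rewrite !phi_f // => /(homeo_inj Hg) ->.
- move=> y _; rewrite /phi; case: ifP => _.
    exact: (homeo_similar y (homeo_id X)).
  exact: (homeo_similar y (homeo_comp Hg Hf')).
have [u' Hu' [uu' u'u]] := homeo_inv Hu.
have ufix : {in a, u =1 id} by move=> x xa; rewrite uphi ?mem_cat ?xa // /phi xa.
have uf : {in a, forall x, u (f x) = g x}.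
  by move=> x xa; rewrite uphi ?mem_cat ?map_f ?orbT // phi_f.
exists u, (f' \o u' \o g); split => //.
- by apply: homeo_comp => //; exact: homeo_comp.
- by move=> x xa /=; rewrite -uf // uu' ff'.
- by apply/funext => x /=; rewrite f'f u'u.
Qed.

Theorem fully_transitive_roelcke_precompact : roelcke_precompact X.
Proof.
move=> U HU; have [s sU] := homeo_id_nbhs_stabilizer HU.
have /choice[rep repP] : forall p : {ffun seq_sub s -> option (seq_sub s)}, exists r,
    Homeo r /\ ((exists2 g, Homeo g & trace s g = p) -> trace s r = p).
  move=> p; have [[g Hg <-]|np] := pselect (exists2 g, Homeo g & trace s g = p).
    by exists g.
  by exists id; split=> [|/np//]; exact: homeo_id X.
exists (range rep).
  by split; [exact: finite_image finite_finset | by move=> _ [p _ <-]; case: (repP p)].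
apply/seteqP; split=> [g Hg | _ [u [f [v [Uu [p _ <-] Uv ->]]]]].
  have [Hf /(_ (ex_intro2 _ _ g Hg erefl)) tf] := repP (trace s g).
  have [u [v [Hu Hv us vs ->]]] := eq_trace_double_coset Hf Hg tf.
  by exists u, (rep (trace s g)), v; split; [exact: sU | by exists (trace s g) | exact: sU |].
have [UH _] := HU.
by apply: homeo_comp; [apply: homeo_comp|]; [exact: UH|case: (repP p)|exact: UH].
Qed.

End RoelckePrecompact.

Local Open Scope ring_scope.

Section Average.
Variables (R : numFieldType) (E : lmodType R).

Definition avg (s : seq E) : E := (size s)%:R^-1 *: \sum_(y <- s) y.

Lemma avg1 y : avg [:: y] = y.
Proof. by rewrite /avg big_seq1 invr1 scale1r. Qed.

Lemma avg_cons y s : s != [::] ->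
  avg (y :: s) = (size s).+1%:R^-1 *: y + (1 - (size s).+1%:R^-1) *: avg s.
Proof.
move=> sn0; rewrite /avg big_cons scalerDr scalerA; congr (_ + _ *: _).
have n0 : (size s)%:R != 0 :> R by rewrite pnatr_eq0 size_eq0.
by rewrite /= -natr1; field; rewrite n0 natr1 pnatr_eq0.
Qed.

Lemma convex_set_conv (C : set E) a b (t : R) :
  convex_set (C : set (convex_lmodType E)) ->
  C a -> C b -> 0 <= t -> t <= 1 -> C (t *: a + (1 - t) *: b).
Proof.
move=> Cconv Ca Cb t0 t1.
by have := Cconv a b (Itv01 t0 t1) (mem_set Ca) (mem_set Cb); rewrite inE.
Qed.

Lemma inv_natS_ge0 n : 0 <= n.+1%:R^-1 :> R.
Proof. by rewrite invr_ge0 ler0n. Qed.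

Lemma inv_natS_le1 n : n.+1%:R^-1 <= 1 :> R.
Proof. by rewrite invf_le1 ?ltr0Sn // ler1n. Qed.

Lemma convex_avg (C : set E) s : convex_set (C : set (convex_lmodType E)) ->
  s != [::] -> {in s, forall y, C y} -> C (avg s).
Proof.
move=> Cconv; elim: s => [//|y s IH] _ sC.
have s'C : {in s, forall z, C z} by move=> z zs; apply: sC; rewrite in_cons zs orbT.
have [->|sn0] := eqVneq s [::]; first by rewrite avg1; exact: sC (mem_head _ _).
rewrite avg_cons //; apply: convex_set_conv.
- exact: Cconv.
- exact: sC (mem_head _ _).
- exact: IH.
- exact: inv_natS_ge0.
- exact: inv_natS_le1.
Qed.

Lemma affine_avg (C : set E) (phi : E -> E) s : convex_set (C : set (convex_lmodType E)) ->
  (forall a b (t : R), C a -> C b -> 0 <= t -> t <= 1 ->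
     phi (t *: a + (1 - t) *: b) = t *: phi a + (1 - t) *: phi b) ->
  s != [::] -> {in s, forall y, C y} -> phi (avg s) = avg (map phi s).
Proof.
move=> Cconv phi_aff; elim: s => [//|y s IH] _ sC.
have [->|sn0] := eqVneq s [::]; first by rewrite /= !avg1.
have s'C : {in s, forall z, C z} by move=> z zs; apply: sC; rewrite in_cons zs orbT.
rewrite avg_cons // phi_aff ?inv_natS_ge0 ?inv_natS_le1 //; last 2 first.
- exact: sC (mem_head _ _).
- exact: convex_avg.
by rewrite IH // map_cons avg_cons ?size_map // -size_eq0 size_map size_eq0.
Qed.

Lemma avg_subr (I : Type) (r : seq I) (F G : I -> E) :
  avg [seq F i | i <- r] - avg [seq G i | i <- r] = avg [seq F i - G i | i <- r].
Proof. by rewrite /avg !size_map !big_map sumrB scalerBr. Qed.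

Lemma avg_group_mulr (gT : finGroupType) (P : {group gT}) (F : gT -> E) tau :
  tau \in P -> avg [seq F s | s <- enum P] = avg [seq F (s * tau)%g | s <- enum P].
Proof.
move=> Ptau; rewrite /avg !size_map !big_map !big_enum /=; congr (_ *: _).
by rewrite (reindex_inj (mulIg tau)) /=; apply: eq_bigl => s; rewrite groupMr.
Qed.

End Average.

Section HomeoClassPerms.
Variable X : topologicalType.
Hypothesis FT : fully_transitive X.
Variable B : seq X.

Definition homeo_rel : rel (seq_sub B) :=
  fun t t' => `[< exists2 h, Homeo h & h (val t) = val t' >].

Lemma homeo_rel_refl : reflexive homeo_rel.
Proof. by move=> t; apply/asboolP; exists id => //; exact: homeo_id. Qed.

Lemma homeo_rel_sym : symmetric homeo_rel.
Proof.
suff rel_sym t t' : homeo_rel t t' -> homeo_rel t' t.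
  by move=> t t'; apply/idP/idP; exact: rel_sym.
move=> /asboolP[h Hh hE]; have [k Hk [hk _]] := homeo_inv Hh.
by apply/asboolP; exists k; rewrite // -hE hk.
Qed.

Lemma homeo_rel_trans : transitive homeo_rel.
Proof.
move=> t2 t1 t3 /asboolP[h Hh hE] /asboolP[k Hk kE].
by apply/asboolP; exists (k \o h); [exact: homeo_comp | rewrite /= hE].
Qed.

Definition homeo_class_perms := class_perms_group homeo_rel_refl homeo_rel_trans.

Lemma homeo_class_perm_realized sigma : sigma \in homeo_class_perms ->
  exists2 h, Homeo h & forall t, h (val t) = val (sigma t).
Proof.
rewrite inE => /forallP sigma_rel.
apply: (fully_transitive_fin FT val_inj (inj_comp val_inj (@perm_inj _ sigma))) => t /=.
by have /asboolP[h Hh <-] := sigma_rel t; exact: homeo_similar.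
Qed.

Lemma homeo_class_perm_extend (g : X -> X) (s : seq X) : Homeo g -> {subset s <= B} ->
  exists2 tau, tau \in homeo_class_perms &
    forall t, g (val t) \in s -> val (tau t) = g (val t).
Proof.
move=> Hg sB; pose D := [set t : seq_sub B | g (val t) \in s]%SET.
have [||tau Ptau tauf] := class_perm_extend homeo_rel_refl homeo_rel_sym homeo_rel_trans
  (D := D) (f := fun t => insubd t (g (val t))).
- move=> t t'; rewrite !inE => gts gt's /(congr1 val).
  by rewrite !val_insubd !sB // => /(homeo_inj Hg)/val_inj.
- by move=> t; rewrite inE => gts; apply/asboolP; exists g; rewrite // val_insubd sB.
by exists tau => // t gts; rewrite tauf ?inE // val_insubd sB.
Qed.

End HomeoClassPerms.

Lemma stabilizer_transversal (X : topologicalType) (s : seq X) (gs : seq (X -> X)) :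
  fully_transitive X -> {in gs, forall g, Homeo g} ->
  exists (T : finType) (P : {group {perm T}}) (H : {perm T} -> X -> X),
    (forall sigma, Homeo (H sigma)) /\
    {in gs, forall g, exists2 tau, tau \in P & forall sigma, sigma \in P ->
       exists2 w, Homeo w /\ {in s, w =1 id} & g \o H sigma = w \o H (sigma * tau)%g}.
Proof.
move=> FT Hgs; have [B sB gsB] := homeo_preimages s Hgs.
pose P := homeo_class_perms B.
have /choice[H HP] : forall sigma : {perm seq_sub B}, exists h,
    Homeo h /\ (sigma \in P -> forall t, h (val t) = val (sigma t)).
  move=> sigma; have [/(homeo_class_perm_realized FT)[h Hh hsigma]|_] := boolP (sigma \in P).
    by exists h.
  by exists id; split=> //; exact: homeo_id.
exists (seq_sub B), P, H; split=> [sigma|g gin]; first by case: (HP sigma).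
have [tau Ptau taug] := homeo_class_perm_extend (Hgs g gin) sB.
exists tau => // sigma Psigma; have [Hsigma Hsigma_val] := HP sigma.
have [Hst Hst_val] := HP (sigma * tau)%g.
have [k Hk [Hst_k _]] := homeo_inv Hst.
exists (g \o H sigma \o k); last by apply/funext => x /=; rewrite Hst_k.
split; first by apply: homeo_comp => //; apply: homeo_comp => //; exact: Hgs.
move=> a sa /=; have [x xB gx] := gsB g gin a sa.
have taux : tau (SeqSub xB) = SeqSub (sB a sa) by apply: val_inj; rewrite /= taug //= gx.
have aE : H (sigma * tau)%g (val ((sigma^-1)%g (SeqSub xB))) = a.
  by rewrite Hst_val ?groupM // permM permKV taux.
by rewrite -{1}aE Hst_k Hsigma_val // permKV /= gx.
Qed.

Lemma nbhs0_convex (R : numDomainType) (E : tvsType R) (W : set E) : nbhs 0 W ->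
  exists2 U, nbhs 0 U /\ convex_set (U : set (convex_lmodType E)) & U `<=` W.
Proof.
move=> W0; have [B Bconv [Bopen Bbasis]] := @locally_convex R E.
have [U [BU U0] UW] := Bbasis 0 _ W0.
exists U => //; split; last exact: Bconv (mem_set BU).
by apply: open_nbhs_nbhs; split=> //; exact: Bopen.
Qed.

Lemma sub_nbhs_split (M : topologicalZmodType) (a b : M) (N : set M) : nbhs (a - b) N ->
  exists C1 C2, [/\ nbhs a C1, nbhs b C2 & forall z w, C1 z -> C2 w -> N (z - w)].
Proof.
move=> /(@sub_continuous M (a, b))[[C1 C2] /= [C1a C2b] C12N].
by exists C1, C2; split=> // z w C1z C2w; exact: (C12N (z, w)).
Qed.

Section Amenability.
Variables (X : topologicalType) (R : realType) (E : tvsType R) (K : set E)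
  (act : (X -> X) -> E -> E).
Hypothesis act_cont : {within (Homeo `*` K : set ({ptws X -> X} * E)),
  continuous (fun p : {ptws X -> X} * E => act p.1 p.2)}.

Lemma act_near u0 y N : Homeo u0 -> K y -> nbhs (act u0 y) N ->
  exists s : seq X, exists2 M, nbhs y M &
    forall u y', Homeo u -> {in s, u =1 u0} -> M y' -> K y' -> N (act u y').
Proof.
move=> Hu0 Ky Nu0y.
have : within (Homeo `*` K : set ({ptws X -> X} * E)) (nbhs ((u0, y) : {ptws X -> X} * E))
    ((fun q : {ptws X -> X} * E => act q.1 q.2) @^-1` N).
  by rewrite (@nbhs_subspace_in ({ptws X -> X} * E)%type) //; exact: act_cont.
move=> [[V M] /= [Vu0 My] VMN].
have [s sV] := ptws_nbhs_agree Vu0.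
by exists s, M => // u y' Hu su My' Ky'; apply: (VMN (u, y')) => //; split=> //=; exact: sV.
Qed.

Hypothesis K_compact : compact K.
Hypothesis act_id : forall k, K k -> act id k = k.

Lemma act_stabilizer_small W : nbhs 0 W -> exists s : seq X,
  forall u, Homeo u -> {in s, u =1 id} -> forall y, K y -> W (act u y - y).
Proof.
move=> W0; have Kcover := (near_covering_withinP K).2 ((compact_near_coveringP K).1 K_compact).
have := Kcover _ (agree_filter id) (fun u y => Homeo u -> W (act u y - y))
  (agree_filter_filter id).
case=> [y Ky|s _ sW]; last by exists s => u Hu su y Ky; exact: sW.
have [C1 [C2 [C1y C2y C12W]]] : exists C1 C2, [/\ nbhs y C1, nbhs y C2 &
    forall z w, C1 z -> C2 w -> W (z - w)] by apply: sub_nbhs_split; rewrite subrr.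
rewrite -{1}(act_id Ky) in C1y; have [s [M My sMC1]] := act_near (homeo_id X) Ky C1y.
exists (M `&` C2, [set u : X -> X | {in s, u =1 id}]); first by split; [exact: filterI | exists s].
by move=> [y' u] /= [[My' C2y'] su] Ky' Hu; apply: C12W => //; exact: sMC1.
Qed.

Hypothesis FT : fully_transitive X.
Hypotheses (K0 : K !=set0) (K_convex : convex_set (K : set (convex_lmodType E))).
Hypothesis act_stable : forall g k, Homeo g -> K k -> K (act g k).
Hypothesis act_comp :
  forall g h k, Homeo g -> Homeo h -> K k -> act (g \o h) k = act g (act h k).
Hypothesis act_affine : forall g a b (t : R), Homeo g -> K a -> K b -> 0 <= t -> t <= 1 ->
  act g (t *: a + (1 - t) *: b) = t *: act g a + (1 - t) *: act g b.

Lemma act_approx_fixed W (gs : seq (X -> X)) :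
  nbhs 0 W -> convex_set (W : set (convex_lmodType E)) -> {in gs, forall g, Homeo g} ->
  exists2 k, K k & {in gs, forall g, W (act g k - k)}.
Proof.
move=> W0 W_convex Hgs; have [s sW] := act_stabilizer_small W0.
have [T [P [H [HH Htransversal]]]] := stabilizer_transversal s FT Hgs.
have [k0 Kk0] := K0; pose ys := [seq act (H sigma) k0 | sigma <- enum P].
have enumP_neq_nil : enum P != [::].
  by apply: contraTneq (group1 P) => P0; rewrite -mem_enum P0.
have ys_neq_nil : ys != [::] by rewrite /ys -size_eq0 size_map size_eq0.
have ysK : {in ys, forall y, K y} by move=> _ /mapP[sigma _ ->]; exact: act_stable.
exists (avg ys); first exact: convex_avg.
move=> g gin; have Hg := Hgs g gin; have [tau Ptau Htau] := Htransversal g gin.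
rewrite (affine_avg (phi := act g) K_convex) // -?map_comp; last by move=> *; exact: act_affine.
rewrite /ys (avg_group_mulr (fun sigma => act (H sigma) k0) Ptau) avg_subr.
apply: convex_avg => // [|_ /mapP[sigma Psigma ->]]; first by rewrite -size_eq0 size_map size_eq0.
rewrite mem_enum in Psigma; have [w [Hw ws] gHw] := Htau sigma Psigma.
by rewrite /= -act_comp // gHw act_comp //; apply: sW => //; exact: act_stable.
Qed.

Hypothesis E_hausdorff : hausdorff_space E.

Lemma act_fixed : exists2 k, K k & forall g, Homeo g -> act g k = k.
Proof.
pose D := [set p : seq (X -> X) * set E | {in p.1, forall g, Homeo g} /\ nbhs 0 p.2].
pose S (p : seq (X -> X) * set E) := [set k | K k /\ {in p.1, forall g, p.2 (act g k - k)}].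
have S_filter : ProperFilter (filter_from D S).
  apply: filter_from_proper; first apply: filter_from_filter.
  - by exists ([::], setT); split=> //; exact: filterT.
  - move=> p q [Hp Wp] [Hq Wq]; exists (p.1 ++ q.1, p.2 `&` q.2).
      by split; [move=> g; rewrite mem_cat => /orP[/Hp|/Hq] | exact: filterI].
    move=> k [Kk /= kpq]; split; split=> // g gin.
      by case: (kpq g) => //; rewrite mem_cat gin.
    by case: (kpq g) => //; rewrite mem_cat gin orbT.
  - move=> [gs W] [/= Hgs W0]; have [U [U0 U_convex] UW] := nbhs0_convex W0.
    have [k Kk kU] := act_approx_fixed U0 U_convex Hgs.
    by exists k; split=> // g gin; apply/UW/kU.
have [|k [Kk k_cluster]] := K_compact S_filter.
  by exists ([::], setT) => [|k []//]; split=> //; exact: filterT.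
exists k => // g Hg; apply: E_hausdorff => A B Agk Bk.
have [C1 [C2 [C1gk C20 C12A]]] : exists C1 C2, [/\ nbhs (act g k) C1, nbhs 0 C2 &
    forall z w, C1 z -> C2 w -> A (z - w)] by apply: sub_nbhs_split; rewrite subr0.
have [s [M Mk sMC1]] := act_near Hg Kk C1gk.
have [|y [[Ky yC2] [My By]]] := k_cluster (S ([:: g], C2)) _ _ (filterI Mk Bk).
  by exists ([:: g], C2) => //; split=> // h; rewrite mem_seq1 => /eqP->.
exists y; split=> //; rewrite -[y](subKr (act g y)).
by apply: C12A; [exact: sMC1 | apply: yC2; rewrite mem_head].
Qed.

End Amenability.

Theorem fully_transitive_amenable (X : topologicalType) :
  fully_transitive X -> amenable X.
Proof.
move=> FT R E K act E_hausdorff K0 K_compact K_convex act_stable act_id act_comp act_affine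
  act_cont.
exact: act_fixed.
Qed.

Theorem theorem14 (X : topologicalType) :
  scattered X -> fully_transitive X ->
  amenable X /\ roelcke_precompact X.
Proof.
move=> _ FT; split; [exact: fully_transitive_amenable | exact: fully_transitive_roelcke_precompact].
Qed.
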